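(* Let $\delta\in(0,1]$, let $a_0\ge0$ and $a_1,a_2,\dots,a_T\ge0$, and let $f:[0,\infty)\to[0,\infty)$ be non-increasing. Then $$\sum_{t=1}^T\sum_{i=0}^{t-1}(1-\delta)^i\,a_{t-i:t}\,f(a_{0:t})\le\frac{1}{\delta^2}\int_{a_0}^{a_{0:T}}f(x)\,dx.$$
   Context: For a sequence $(a_s)$, $a_{m:n}=\sum_{s=m}^na_s$. *)

From Stdlib Require Import Reals List.
From Coquelicot Require Import Coquelicot.
Open Scope R_scope.

(* sumR m n g = g m + g (m+1) + ... + g n  (empty, i.e. 0, if n < m). *)
Definition sumR (m n : nat) (g : nat -> R) : R :=
  fold_right Rplus 0 (map g (seq m (S n - m))).

Definition psum (a : nat -> R) (m n : nat) : R := sumR m n a.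

From Stdlib Require Import Reals List.
From Stdlib Require Import RList Lra Lia.
From Coquelicot Require Import Coquelicot.
Open Scope R_scope.

(* Write b_t for the inner sum and F_t := f (a_{0:t}).  Splitting a_{t+1} off every
   suffix sum gives b_{t+1} = (1-δ) b_t + a_{t+1} Σ_{i≤t} (1-δ)^i <= (1-δ) b_t + a_{t+1}/δ.
   As F is non-increasing, the potential Σ_{s≤t} b_s F_s + ((1-δ)/δ) b_t F_t then grows
   by at most a_{t+1} F_{t+1} / δ² per step, and Σ_t a_t F_t is a lower Riemann sum of
   the integral of f over [a_0, a_{0:T}]. *)

Lemma sumR_sum_n_m (m n : nat) (g : nat -> R) : sumR m n g = sum_n_m g m n.
Proof.
  unfold sumR, sum_n_m, Iter.iter_nat.
  generalize (S n - m)%nat; intros k.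
  induction k as [|k IH] in m |- *; simpl; [reflexivity | now rewrite IH].
Qed.

Lemma sumR_nil (m n : nat) (g : nat -> R) : (n < m)%nat -> sumR m n g = 0.
Proof. intros H; rewrite sumR_sum_n_m; exact (sum_n_m_zero g m n H). Qed.

Lemma sumR_Sr (m n : nat) (g : nat -> R) :
  (m <= S n)%nat -> sumR m (S n) g = sumR m n g + g (S n).
Proof. intros H; rewrite !sumR_sum_n_m; exact (sum_n_Sm g m n H). Qed.

Lemma sumR_Sl (m n : nat) (g : nat -> R) :
  (m <= n)%nat -> sumR m n g = g m + sumR (S m) n g.
Proof. intros H; rewrite !sumR_sum_n_m; exact (sum_Sn_m g m n H). Qed.

Lemma sumR_shift (m n : nat) (g : nat -> R) :
  sumR (S m) (S n) g = sumR m n (fun i => g (S i)).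
Proof. rewrite !sumR_sum_n_m; symmetry; exact (sum_n_m_S g m n). Qed.

Lemma sumR_ext (m n : nat) (g h : nat -> R) :
  (forall i, (m <= i <= n)%nat -> g i = h i) -> sumR m n g = sumR m n h.
Proof. intros H; rewrite !sumR_sum_n_m; exact (sum_n_m_ext_loc g h m n H). Qed.

Lemma sumR_plus (m n : nat) (g h : nat -> R) :
  sumR m n (fun i => g i + h i) = sumR m n g + sumR m n h.
Proof. rewrite !sumR_sum_n_m; exact (sum_n_m_plus g h m n). Qed.

Lemma sumR_mult_l (m n : nat) (c : R) (g : nat -> R) :
  sumR m n (fun i => c * g i) = c * sumR m n g.
Proof. rewrite !sumR_sum_n_m; exact (sum_n_m_mult_l c g m n). Qed.

Lemma sumR_mult_r (m n : nat) (c : R) (g : nat -> R) :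
  sumR m n (fun i => g i * c) = sumR m n g * c.
Proof. rewrite !sumR_sum_n_m; exact (sum_n_m_mult_r c g m n). Qed.

Lemma sumR_nonneg (m n : nat) (g : nat -> R) :
  (forall i, 0 <= g i) -> 0 <= sumR m n g.
Proof.
  intros H; rewrite sumR_sum_n_m.
  rewrite <- (Rmult_0_r (INR (S n - m))), <- sum_n_m_const.
  now apply sum_n_m_le.
Qed.

Lemma sumR_geometric_le (q : R) (n : nat) :
  0 <= q < 1 -> sumR 0 n (fun i => q ^ i) <= / (1 - q).
Proof.
  intros Hq.
  assert (Hclosed : (1 - q) * sumR 0 n (fun i => q ^ i) = 1 - q ^ S n).
  { induction n as [|n IH].
    - unfold sumR; simpl; ring.
    - rewrite sumR_Sr, Rmult_plus_distr_l, IH by lia; simpl; ring. }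
  assert (0 <= q ^ S n) by (apply pow_le; lra).
  apply (Rmult_le_reg_l (1 - q)); [lra|].
  rewrite Hclosed, Rinv_r by lra; lra.
Qed.

Lemma psum_0_0 (a : nat -> R) : psum a 0 0 = a 0%nat.
Proof. unfold psum, sumR; simpl; ring. Qed.

Lemma psum_0_S (a : nat -> R) (t : nat) : psum a 0 (S t) = psum a 0 t + a (S t).
Proof. apply sumR_Sr; lia. Qed.

Lemma psum_nonneg (a : nat -> R) (m n : nat) :
  (forall s, 0 <= a s) -> 0 <= psum a m n.
Proof. apply sumR_nonneg. Qed.

Lemma psum_0_ge_a0 (a : nat -> R) (t : nat) :
  (forall s, 0 <= a s) -> a 0%nat <= psum a 0 t.
Proof.
  intros Ha; induction t as [|t IH].
  - rewrite psum_0_0; lra.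
  - rewrite psum_0_S; specialize (Ha (S t)); lra.
Qed.

(* For [t = 0] the truncated [t - 1] makes this [a 0] rather than an empty sum. *)
Definition discounted_suffix_sum (q : R) (a : nat -> R) (t : nat) : R :=
  sumR 0 (t - 1) (fun i => q ^ i * psum a (t - i) t).

Lemma discounted_suffix_sum_1 (q : R) (a : nat -> R) :
  discounted_suffix_sum q a 1 = a 1%nat.
Proof. unfold discounted_suffix_sum, psum, sumR; simpl; ring. Qed.

Lemma discounted_suffix_sum_nonneg (q : R) (a : nat -> R) (t : nat) :
  0 <= q -> (forall s, 0 <= a s) -> 0 <= discounted_suffix_sum q a t.
Proof.
  intros Hq Ha; apply sumR_nonneg; intros i.
  apply Rmult_le_pos; [now apply pow_le | now apply psum_nonneg].
Qed.

Lemma discounted_suffix_sum_S (q : R) (a : nat -> R) (t : nat) :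
  (1 <= t)%nat ->
  discounted_suffix_sum q a (S t)
  = q * discounted_suffix_sum q a t + a (S t) * sumR 0 t (fun i => q ^ i).
Proof.
  intros Ht; destruct t as [|u]; [lia|]; unfold discounted_suffix_sum.
  replace (S (S u) - 1)%nat with (S u) by lia.
  replace (S u - 1)%nat with u by lia.
  rewrite (sumR_ext 0 (S u) _
             (fun i => q ^ i * psum a (S (S u) - i) (S u) + a (S (S u)) * q ^ i)).
  2: { intros i Hi; unfold psum; rewrite sumR_Sr by lia; ring. }
  rewrite sumR_plus, sumR_mult_l, (sumR_Sl 0 (S u)), sumR_shift by lia.
  unfold psum at 1; rewrite (sumR_nil (S (S u) - 0)) by lia.
  rewrite (sumR_ext 0 u _ (fun i => q * (q ^ i * psum a (S u - i) (S u))))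
    by (intros; simpl; ring).
  rewrite sumR_mult_l; change (pow q) with (fun i => q ^ i); cbv beta; ring.
Qed.

Lemma discounted_suffix_sum_S_le (d : R) (a : nat -> R) (t : nat) :
  0 < d <= 1 -> (forall s, 0 <= a s) -> (1 <= t)%nat ->
  discounted_suffix_sum (1 - d) a (S t)
  <= (1 - d) * discounted_suffix_sum (1 - d) a t + a (S t) / d.
Proof.
  intros Hd Ha Ht.
  rewrite discounted_suffix_sum_S by exact Ht.
  apply Rplus_le_compat_l; unfold Rdiv.
  apply Rmult_le_compat_l; [apply Ha|].
  replace (/ d) with (/ (1 - (1 - d))) by (f_equal; ring).
  apply sumR_geometric_le; lra.
Qed.

Section DiscountedPotential.

Variables (d : R) (b c F : nat -> R).
Hypothesis d_range : 0 < d <= 1.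
Hypothesis b_nonneg : forall t, 0 <= b t.
Hypothesis F_noninc : forall t, 0 <= F (S t) <= F t.
Hypothesis b_1_le : b 1%nat <= c 1%nat / d.
Hypothesis b_S_le : forall t, (1 <= t)%nat -> b (S t) <= (1 - d) * b t + c (S t) / d.

Lemma discounted_potential_le (v : nat) :
  sumR 1 (S v) (fun t => b t * F t) + (1 - d) / d * b (S v) * F (S v)
  <= / d ^ 2 * sumR 1 (S v) (fun t => c t * F t).
Proof.
  assert (Hid : / d ^ 2 = / d * / d) by (field; lra).
  assert (Hq : (1 - d) / d = / d - 1) by (field; lra).
  assert (Hd1 : 1 <= / d) by (rewrite <- Rinv_1; apply Rinv_le_contravar; lra).
  rewrite Hid, Hq.
  induction v as [|v IH].
  - rewrite !(sumR_Sl 1 1), !sumR_nil by lia.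
    pose proof (F_noninc 0) as HF.
    assert (b 1%nat * F 1%nat <= c 1%nat / d * F 1%nat)
      by (apply Rmult_le_compat_r; lra).
    assert (/ d * (b 1%nat * F 1%nat) <= / d * (c 1%nat / d * F 1%nat))
      by (apply Rmult_le_compat_l; lra).
    unfold Rdiv in *; lra.
  - rewrite !(sumR_Sr 1 (S v)) by lia.
    pose proof (F_noninc (S v)) as HF.
    pose proof (b_nonneg (S v)) as Hb.
    assert (Hstep : / d * (b (S (S v)) * F (S (S v)))
                    <= (/ d - 1) * b (S v) * F (S (S v))
                       + / d * / d * c (S (S v)) * F (S (S v))).
    { rewrite <- Hq.
      replace (_ + _) with (/ d * (((1 - d) * b (S v) + c (S (S v)) / d) * F (S (S v))))
        by (field; lra).
      apply Rmult_le_compat_l; [lra|].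
      apply Rmult_le_compat_r; [lra | apply b_S_le; lia]. }
    assert (Hdecay : (/ d - 1) * b (S v) * F (S (S v)) <= (/ d - 1) * b (S v) * F (S v))
      by (apply Rmult_le_compat_l; [apply Rmult_le_pos|]; lra).
    lra.
Qed.

Lemma discounted_weighted_sum_le (T : nat) :
  sumR 1 T (fun t => b t * F t) <= / d ^ 2 * sumR 1 T (fun t => c t * F t).
Proof.
  destruct T as [|v].
  - rewrite !sumR_nil by lia; lra.
  - pose proof (discounted_potential_le v).
    assert (0 <= (1 - d) / d * b (S v) * F (S v)).
    { pose proof (F_noninc v); pose proof (b_nonneg (S v)).
      apply Rmult_le_pos; [apply Rmult_le_pos|]; unfold Rdiv;
        try apply Rmult_le_pos; try apply Rlt_le, Rinv_0_lt_compat; lra. }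
    lra.
Qed.

End DiscountedPotential.

Lemma IsStepFun_ext_open (f g : R -> R) (a b : R) :
  a <= b -> (forall x, a < x < b -> f x = g x) -> IsStepFun f a b -> IsStepFun g a b.
Proof.
  intros Hab Hfg [l [lf (Hord & H0 & Hl & Hlen & Hc)]].
  exists l, lf; repeat split; try assumption.
  intros i Hi x Hx; unfold open_interval in Hx.
  rewrite Rmin_left in H0 by lra; rewrite Rmax_right in Hl by lra.
  pose proof (proj1 (RList_P6 l) Hord) as Hsorted.
  assert (pos_Rl l 0 <= pos_Rl l i) by (apply Hsorted; lia).
  assert (pos_Rl l (S i) <= pos_Rl l (Init.Nat.pred (length l))) by (apply Hsorted; lia).
  rewrite <- Hfg by lra; exact (Hc i Hi x Hx).
Qed.

Lemma RiemannInt_SF_ext_open (a b : R) (f g : StepFun a b) :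
  a <= b -> (forall x, a < x < b -> f x = g x) -> RiemannInt_SF f = RiemannInt_SF g.
Proof.
  intros Hab H.
  apply Rle_antisym; apply StepFun_P37; try assumption;
    intros x Hx; rewrite H by assumption; lra.
Qed.

Section ExtendStepFun.

Variables (a b c v : R).
Hypotheses (Hab : a <= b) (Hbc : b <= c).

Definition extend_cte (phi : R -> R) : R -> R :=
  fun t => if Rle_dec t b then phi t else v.

Lemma extend_cte_left (phi : R -> R) (t : R) : t <= b -> extend_cte phi t = phi t.
Proof. intros H; unfold extend_cte; destruct (Rle_dec t b); [reflexivity | lra]. Qed.

Lemma extend_cte_right (phi : R -> R) (t : R) : b < t -> extend_cte phi t = v.
Proof. intros H; unfold extend_cte; destruct (Rle_dec t b); [lra | reflexivity]. Qed.

Lemma IsStepFun_extend_cte_left (phi : StepFun a b) : IsStepFun (extend_cte phi) a b.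
Proof.
  apply (IsStepFun_ext_open phi); [exact Hab | | apply pre].
  intros t Ht; symmetry; apply extend_cte_left; lra.
Qed.

Lemma IsStepFun_extend_cte_right (phi : StepFun a b) : IsStepFun (extend_cte phi) b c.
Proof.
  apply (IsStepFun_ext_open (fct_cte v)); [exact Hbc | | apply StepFun_P4].
  intros t Ht; symmetry; apply extend_cte_right; lra.
Qed.

Definition StepFun_extend_cte (phi : StepFun a b) : StepFun a c :=
  mkStepFun (StepFun_P46 (IsStepFun_extend_cte_left phi) (IsStepFun_extend_cte_right phi)).

Lemma RiemannInt_SF_extend_cte (phi : StepFun a b) :
  RiemannInt_SF (StepFun_extend_cte phi) = RiemannInt_SF phi + v * (c - b).
Proof.
  unfold StepFun_extend_cte.
  rewrite <- (StepFun_P43 (IsStepFun_extend_cte_left phi) (IsStepFun_extend_cte_right phi)).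
  rewrite (RiemannInt_SF_ext_open _ _ (mkStepFun (IsStepFun_extend_cte_left phi)) phi),
    (RiemannInt_SF_ext_open _ _ (mkStepFun (IsStepFun_extend_cte_right phi))
       (mkStepFun (StepFun_P4 b c v))), StepFun_P18 by
    (try assumption; intros t Ht; simpl;
     first [apply extend_cte_left | apply extend_cte_right]; lra).
  reflexivity.
Qed.

End ExtendStepFun.

Definition nonincreasing_on (f : R -> R) (a b : R) : Prop :=
  forall u v, a <= u -> u <= v -> v <= b -> f v <= f u.

(* On the grid [a + k h], approximate [f] by its value at the left node; the error is
   bounded by the jump [f (a + k h) - f (a + (k + 1) h)] of the cell, which telescopes. *)
Lemma nonincreasing_step_bracket (f : R -> R) (a b h : R) (N : nat) :
  0 <= h -> b = a + INR N * h -> nonincreasing_on f a b ->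
  {phi : StepFun a b & {psi : StepFun a b |
    (forall t, a <= t <= b -> Rabs (f t - phi t) <= psi t) /\
    RiemannInt_SF psi = h * (f a - f b)}}.
Proof.
  intros Hh; revert b; induction N as [|N IH]; intros c Hc Hf.
  - simpl in Hc; replace c with a by lra.
    exists (mkStepFun (StepFun_P4 a a (f a))), (mkStepFun (StepFun_P4 a a 0)); split.
    + intros t Ht; replace t with a by lra; simpl; unfold fct_cte.
      rewrite Rminus_diag, Rabs_R0; lra.
    + rewrite StepFun_P18; ring.
  - set (b := a + INR N * h).
    assert (Hab : a <= b) by (unfold b; pose proof (pos_INR N); nra).
    assert (Hbc : c = b + h) by (unfold b; rewrite Hc, S_INR; ring).
    destruct (IH b eq_refl) as [phi [psi [Hbound Hint]]].
    { intros u v Hu Huv Hv; apply Hf; lra. }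
    exists (StepFun_extend_cte a b c (f b) Hab ltac:(lra) phi),
           (StepFun_extend_cte a b c (f b - f c) Hab ltac:(lra) psi); split.
    + intros t Ht; simpl.
      destruct (Rle_dec t b) as [Htb | Htb].
      * rewrite !extend_cte_left by exact Htb; apply Hbound; lra.
      * rewrite !extend_cte_right by lra.
        assert (f c <= f t) by (apply Hf; lra).
        assert (f t <= f b) by (apply Hf; lra).
        rewrite Rabs_left1; lra.
    + rewrite RiemannInt_SF_extend_cte, Hint, Hbc; ring.
Qed.

Lemma ex_RInt_nonincreasing (f : R -> R) (a b : R) :
  a <= b -> nonincreasing_on f a b -> ex_RInt f a b.
Proof.
  intros Hab Hf; apply ex_RInt_Reals_1; intros eps.
  set (K := (b - a) * (f a - f b)).
  assert (HK : 0 <= K).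
  { assert (f b <= f a) by (apply Hf; lra); unfold K; nra. }
  pose proof (cond_pos eps) as Heps.
  destruct (nfloor_ex (K / eps)) as [n Hn].
  { apply Rdiv_le_0_compat; lra. }
  set (N := S n).
  assert (HN : K / eps < INR N) by (unfold N; rewrite S_INR; lra).
  assert (HN0 : 0 < INR N) by (unfold N; rewrite S_INR; pose proof (pos_INR n); lra).
  set (h := (b - a) / INR N).
  destruct (nonincreasing_step_bracket f a b h N) as [phi [psi [Hbound Hint]]];
    [unfold h; apply Rdiv_le_0_compat; lra | unfold h; field; lra | exact Hf |].
  exists phi, psi; split.
  - rewrite Rmin_left, Rmax_right by lra; exact Hbound.
  - assert (HKN : h * (f a - f b) = K / INR N) by (unfold h, K; field; lra).
    rewrite Hint, HKN, Rabs_right by (apply Rle_ge, Rdiv_le_0_compat; lra).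
    apply (Rmult_lt_reg_r (INR N)); [exact HN0|].
    unfold Rdiv at 1; rewrite Rmult_assoc, Rinv_l, Rmult_1_r by lra.
    apply (Rmult_lt_reg_l (/ eps)); [apply Rinv_0_lt_compat; lra|].
    rewrite <- Rmult_assoc, Rinv_l, Rmult_1_l by lra.
    rewrite Rmult_comm; exact HN.
Qed.

Lemma RInt_ge_nonincreasing (f : R -> R) (x y : R) :
  x <= y -> nonincreasing_on f x y -> (y - x) * f y <= RInt f x y.
Proof.
  intros Hxy Hf.
  replace ((y - x) * f y) with (RInt (fun _ => f y) x y) by now rewrite RInt_const.
  apply RInt_le; [exact Hxy | apply ex_RInt_const | now apply ex_RInt_nonincreasing |].
  intros t Ht; apply Hf; lra.
Qed.

Lemma psum_weighted_le_RInt (a : nat -> R) (f : R -> R) (T : nat) :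
  (forall s, 0 <= a s) -> (forall x y, a 0%nat <= x -> x <= y -> f y <= f x) ->
  sumR 1 T (fun t => a t * f (psum a 0 t)) <= RInt f (a 0%nat) (psum a 0 T).
Proof.
  intros Ha Hf.
  assert (Hex : forall x y, a 0%nat <= x -> x <= y -> ex_RInt f x y).
  { intros x y Hx Hxy; apply ex_RInt_nonincreasing; [exact Hxy|].
    intros u v Hu Huv Hv; apply Hf; lra. }
  induction T as [|T IH].
  - rewrite sumR_nil, psum_0_0, RInt_point by lia; apply Rle_refl.
  - pose proof (psum_0_ge_a0 a T Ha) as HT.
    pose proof (Ha (S T)) as HaS.
    rewrite sumR_Sr, psum_0_S by lia.
    rewrite <- (RInt_Chasles f (a 0%nat) (psum a 0 T)) by (apply Hex; lra).
    apply Rplus_le_compat; [exact IH|].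
    replace (a (S T)) with (psum a 0 T + a (S T) - psum a 0 T) at 1 by ring.
    apply RInt_ge_nonincreasing; [lra|].
    intros u v Hu Huv _; apply Hf; lra.
Qed.

Theorem lemma4 (delta : R) (a : nat -> R) (f : R -> R) (T : nat) :
  0 < delta <= 1 ->
  (forall s : nat, 0 <= a s) ->
  (forall x : R, 0 <= x -> 0 <= f x) ->
  (forall x y : R, 0 <= x -> x <= y -> f y <= f x) ->
  sumR 1 T (fun t =>
    sumR 0 (t - 1) (fun i =>
      (1 - delta) ^ i * psum a (t - i) t * f (psum a 0 t)))
  <= / delta ^ 2 * RInt f (a 0%nat) (psum a 0 T).
Proof.
  intros Hd Ha Hf0 Hfm.
  set (F := fun t => f (psum a 0 t)).
  assert (Hpsum : forall t, 0 <= psum a 0 t) by (intros; now apply psum_nonneg).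
  rewrite (sumR_ext 1 T _ (fun t => discounted_suffix_sum (1 - delta) a t * F t))
    by (intros t _; apply sumR_mult_r).
  eapply Rle_trans.
  - apply (discounted_weighted_sum_le delta _ a F); [exact Hd | | | | ].
    + intros t; apply discounted_suffix_sum_nonneg; [lra | exact Ha].
    + intros t; unfold F; rewrite psum_0_S; split.
      * apply Hf0, Rplus_le_le_0_compat; [apply Hpsum | apply Ha].
      * apply Hfm; [apply Hpsum | pose proof (Ha (S t)); lra].
    + rewrite discounted_suffix_sum_1; unfold Rdiv.
      rewrite <- (Rmult_1_r (a 1%nat)) at 1.
      apply Rmult_le_compat_l; [apply Ha|].
      rewrite <- Rinv_1; apply Rinv_le_contravar; lra.
    + intros t Ht; now apply discounted_suffix_sum_S_le.
  - apply Rmult_le_compat_l; [apply Rlt_le, Rinv_0_lt_compat, pow_lt; lra|].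
    apply psum_weighted_le_RInt; [exact Ha|].
    intros x y Hx Hxy; apply Hfm; [pose proof (Ha 0%nat) |]; lra.
Qed.
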